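(* Let $Z_\infty=(X_\infty,Y_\infty)$ be the planar piecewise smooth vector field with $X_\infty(x,y)=(1,2\sin(2\pi x))$ for $y\ge0$ and $Y_\infty(x,y)=(-1,2\sin(2\pi x))$ for $y\le0$, let $P_\infty(x)=\frac{1-\cos(2\pi x)}{\pi}$, and let $\Lambda_\infty=\{(x,P_\infty(x)):x\in\mathbb{R}\}\cup\{(x,-P_\infty(x)):x\in\mathbb{R}\}$. Then $\Lambda_\infty$ is invariant under $Z_\infty$, and the time-one map $\overline{T_1}$ of $Z_\infty$ restricted to $\Lambda_\infty$ (on $(\overline{\Omega}_\infty,\rho_\infty)$ defined below) is topologically conjugate to a subshift over the infinite alphabet $\mathbb{Z}$ inside $\Theta_\infty$: there exist a subshift $K\subset\Theta_\infty$ and a homeomorphism $h:\overline{\Omega}_\infty\to K$ with $h\circ\overline{T_1}=\sigma|_K\circ h$.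
   Context: Switching manifold $\Sigma=\{(x,y):y=0\}=f^{-1}(0)$, $f(x,y)=y$, $\Sigma^\pm=\{\pm y\ge0\}$. A planar PSVF $Z=(X,Y)$ equals the smooth field $X$ on $\Sigma^+$ and $Y$ on $\Sigma^-$. With $Wf=\langle\nabla f,W\rangle$, $W^2f=\langle\nabla(Wf),W\rangle$: crossing region $\Sigma^c=\{Xf\cdot Yf>0\}$ ($\Sigma^{c+}$: both $>0$, $\Sigma^{c-}$: both $<0$), sliding $\Sigma^s=\{Xf<0<Yf\}$, escaping $\Sigma^e=\{Yf<0<Xf\}$. $p\in\Sigma$ with $Xf(p)=0$ is a tangential singularity of $X$; a fold if $X^2f(p)\ne0$, visible if $X^2f(p)>0$, invisible if $<0$; for $Y$ a fold is visible if $Y^2f(p)<0$ (orbit locally in $\Sigma^-$), invisible otherwise. Singular tangency: invisible for both fields; regular otherwise. Sliding field on $\overline{\Sigma^s\cup\Sigma^e}$: $Z^T=(Yf\,X-Xf\,Y)/(Yf-Xf)$. Local trajectories (Filippov convention): off $\Sigma$ follow $X$ or $Y$; through $\Sigma^{c+}$ follow $Y$ for $t\le0$ and $X$ for $t\ge0$ (reversed for $\Sigma^{c-}$); through $\Sigma^e$ follow $Z^T$ for $t\le0$ and one of $X,Y,Z^T$ for $t\ge0$ (reversed for $\Sigma^s$); through a regular tangency one of the flows of $X,Y,Z^T$ for $t\le0$ and one for $t\ge0$; singular tangencies are stationary. A global trajectory is a map $\gamma:\mathbb{R}\to\mathbb{R}^2$ concatenating orientation-preserving local trajectories $\sigma_i$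 on $[t_i,t_{i+1}]$, $i\in\mathbb{Z}$, with $\sigma_i(t_{i+1})=\sigma_{i+1}(t_{i+1})$, $t_i\to\pm\infty$. A set $\Lambda$ is invariant if every global trajectory starting in $\Lambda$ at time $0$ stays in $\Lambda$. Construction: $p_j=j$, $j\in\mathbb{Z}$. $\Omega_\infty$ is the set of global trajectories $\gamma$ of $Z_\infty$ with $\gamma(0)\in\Lambda_\infty$; $T_1(\gamma)(t)=\gamma(t+1)$. Arcs: $I_{2j}=\{(x,P_\infty(x)):j<x<j+1\}$, $I_{2j+1}=\{(x,-P_\infty(x)):j<x<j+1\}$, $j\in\mathbb{Z}$. Itinerary $s(\gamma)\in\mathbb{Z}^{\mathbb{Z}}$: $s(\gamma)_j=n$ if $\gamma(j)\in I_n$, and $s(\gamma)_j=m$ if $\gamma(j)=(p_l,0)$ for some $l$ and $\gamma(j+\frac12)\in I_m$. $\gamma_1\sim\gamma_2$ iff $s(\gamma_1)=s(\gamma_2)$; $\overline{\Omega}_\infty=\Omega_\infty/\sim$. Each class has a representative $\gamma^*$ with $\gamma^*(0)\in\{(p_l,0):l\in\mathbb{Z}\}$; $\rho_\infty(\overline\gamma_1,\overline\gamma_2)=\sum_{i\in\mathbb{Z}}2^{-|i|}d_H(\gamma_1^*([i,i+1]),\gamma_2^*([i,i+1]))$, $d_H$ the Hausdorff distance. $\overline{T_1}(\overline\gamma)=\overline{T_1(\gamma)}$. $\Theta_\infty=\{(x_j)_{j\in\mathbb{Z}}: x_j\in\mathbb{Z},\ |x_{j+1}-x_j|\le2\ \forall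 j\}$ with metric $d(x,y)=\sum_{j\in\mathbb{Z}}|x_j-y_j|/2^{|j|}$ and shift $\sigma((a_j)_j)=(a_{j+1})_j$. A subshift is a closed $\sigma$-invariant subset. *)

From Stdlib Require Import Reals ZArith ClassicalEpsilon.
From Coquelicot Require Import Coquelicot.
Open Scope R_scope.

Definition pt := (R * R)%type.

(* W f = <grad f, W> = second component of W *)
Definition Wf (W : pt -> pt) (p : pt) : R := snd (W p).

(* W^2 f (p) = <grad (W f)(p), W(p)>, written as the directional derivative of W f
   at p in the direction W(p) (for smooth W). *)
Definition W2f_is (W : pt -> pt) (p : pt) (v : R) : Prop :=
  derivable_pt_lim
    (fun s => Wf W (fst p + s * fst (W p), snd p + s * snd (W p))) 0 v.

Definition inSigma (p : pt) : Prop := snd p = 0.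
Definition inSigmaPlus (p : pt) : Prop := snd p >= 0.
Definition inSigmaMinus (p : pt) : Prop := snd p <= 0.

Definition sliding (X Y : pt -> pt) (p : pt) : Prop :=
  inSigma p /\ Wf X p < 0 < Wf Y p.
Definition escaping (X Y : pt -> pt) (p : pt) : Prop :=
  inSigma p /\ Wf Y p < 0 < Wf X p.

Definition dist2 (p q : pt) : R :=
  sqrt ((fst p - fst q) ^ 2 + (snd p - snd q) ^ 2).

Definition sl_es_closure (X Y : pt -> pt) (p : pt) : Prop :=
  forall eps, eps > 0 -> exists q, (sliding X Y q \/ escaping X Y q) /\ dist2 p q < eps.

Definition ZT (X Y : pt -> pt) (p : pt) : pt :=
  ((Wf Y p * fst (X p) - Wf X p * fst (Y p)) / (Wf Y p - Wf X p),
   (Wf Y p * snd (X p) - Wf X p * snd (Y p)) / (Wf Y p - Wf X p)).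

(* singular tangency: invisible fold for both X and Y *)
Definition singular_tangency (X Y : pt -> pt) (p : pt) : Prop :=
  inSigma p /\ Wf X p = 0 /\ Wf Y p = 0 /\
  (exists v, W2f_is X p v /\ v < 0) /\ (exists v, W2f_is Y p v /\ v > 0).

(* g solves g' = W(g) on [a,b] (interior derivative; continuity is global below) *)
Definition is_solution (W : pt -> pt) (g : R -> pt) (a b : R) : Prop :=
  a < b /\ forall t, a < t < b ->
    derivable_pt_lim (fun s => fst (g s)) t (fst (W (g t))) /\
    derivable_pt_lim (fun s => snd (g s)) t (snd (W (g t))).

(* an orientation-preserving local trajectory (Filippov convention) on [a,b] *)
Definition local_piece (X Y : pt -> pt) (g : R -> pt) (a b : R) : Prop :=
  (is_solution X g a b /\ forall t, a <= t <= b -> inSigmaPlus (g t)) \/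
  (is_solution Y g a b /\ forall t, a <= t <= b -> inSigmaMinus (g t)) \/
  (is_solution (ZT X Y) g a b /\ forall t, a <= t <= b -> sl_es_closure X Y (g t)) \/
  (a < b /\ exists p, singular_tangency X Y p /\ forall t, a <= t <= b -> g t = p).

Definition global_trajectory (X Y : pt -> pt) (g : R -> pt) : Prop :=
  (forall t, continuity_pt (fun s => fst (g s)) t /\ continuity_pt (fun s => snd (g s)) t) /\
  exists tau : Z -> R,
    (forall i, tau i < tau (i + 1)%Z) /\
    (forall M, exists i, tau i > M) /\ (forall M, exists i, tau i < M) /\
    (forall i, local_piece X Y g (tau i) (tau (i + 1)%Z)).

Definition invariant (X Y : pt -> pt) (L : pt -> Prop) : Prop :=
  forall g, global_trajectory X Y g -> L (g 0) -> forall t, L (g t).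

Definition Xinf (p : pt) : pt := (1, 2 * sin (2 * PI * fst p)).
Definition Yinf (p : pt) : pt := (-1, 2 * sin (2 * PI * fst p)).
Definition Pinf (x : R) : R := (1 - cos (2 * PI * x)) / PI.

Definition Lambda_inf (p : pt) : Prop :=
  snd p = Pinf (fst p) \/ snd p = - Pinf (fst p).

(* I_{2j} = {(x,P(x)) : j<x<j+1},  I_{2j+1} = {(x,-P(x)) : j<x<j+1} *)
Definition arc (n : Z) (p : pt) : Prop :=
  IZR (n / 2) < fst p < IZR (n / 2) + 1 /\
  snd p = (if Z.even n then Pinf (fst p) else - Pinf (fst p)).

Definition Omega_inf (g : R -> pt) : Prop :=
  global_trajectory Xinf Yinf g /\ Lambda_inf (g 0).

Definition T1 (g : R -> pt) : R -> pt := fun t => g (t + 1).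

Definition itinerary (g : R -> pt) (s : Z -> Z) : Prop :=
  forall j : Z,
    arc (s j) (g (IZR j)) \/
    (exists l : Z, g (IZR j) = (IZR l, 0) /\ arc (s j) (g (IZR j + / 2))).

Definition itin_equiv (g1 g2 : R -> pt) : Prop :=
  exists s, itinerary g1 s /\ itinerary g2 s.

Definition is_rep (g gs : R -> pt) : Prop :=
  Omega_inf gs /\ itin_equiv gs g /\ exists l : Z, gs 0 = (IZR l, 0).

Definition rep (g : R -> pt) : R -> pt := epsilon (inhabits g) (is_rep g).

Definition dist_pt_set (p : pt) (B : pt -> Prop) : R :=
  real (Glb_Rbar (fun r => exists q, B q /\ r = dist2 p q)).
Definition dH (A B : pt -> Prop) : R :=
  Rmax (real (Lub_Rbar (fun r => exists a, A a /\ r = dist_pt_set a B)))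
       (real (Lub_Rbar (fun r => exists b, B b /\ r = dist_pt_set b A))).

Definition seg (g : R -> pt) (i : Z) : pt -> Prop :=
  fun p => exists t, IZR i <= t <= IZR i + 1 /\ p = g t.

Definition sumZ (a : Z -> R) : R :=
  Series (fun n => a (Z.of_nat n)) + Series (fun n => a (- Z.of_nat (S n))%Z).

Definition rho_inf (g1 g2 : R -> pt) : R :=
  sumZ (fun i => (/ 2) ^ (Z.abs_nat i) * dH (seg (rep g1) i) (seg (rep g2) i)).

Definition Theta_inf (x : Z -> Z) : Prop :=
  forall j, (Z.abs (x (j + 1) - x j) <= 2)%Z.

Definition dTheta (x y : Z -> Z) : R :=
  sumZ (fun j => IZR (Z.abs (x j - y j)) / 2 ^ (Z.abs_nat j)).

Definition sigma_shift (x : Z -> Z) : Z -> Z := fun j => x (j + 1)%Z.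

(* subshift: closed, sigma_shift-invariant (sigma(K) = K) subset of Theta_oo *)
Definition subshift (K : (Z -> Z) -> Prop) : Prop :=
  (forall x, K x -> Theta_inf x) /\
  (forall x, Theta_inf x ->
     (forall eps, eps > 0 -> exists y, K y /\ dTheta x y < eps) -> K x) /\
  (forall x, K x -> K (sigma_shift x)) /\
  (forall x, K x -> exists y, K y /\ sigma_shift y = x).

(* Both fields move the abscissa at unit speed, rightwards above Sigma and
   leftwards below it, and Lambda_inf is a union of level sets of their first
   integrals y +- cos (2 PI x) / PI.  As Lambda_inf contains no sliding point
   and no singular tangency, it is invariant.  A trajectory in Lambda_inf
   therefore meets Sigma only at the points (p_l, 0), exactly at the times of
   -psi + Z for a phase psi in [0, 1), and between two such times runs through
   one whole arc I_n.  Up to its phase it is the path [follow s] running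
   through the arcs s_j, j in Z, consecutive arcs sharing an endpoint, and h
   maps it to s.  These sequences form a closed shift-invariant subset of
   Theta_inf, and h T_1 = sigma h since [follow s (t + 1) = follow (sigma s) t].
   Finally h is a homeomorphism because the j-th terms of rho_inf and of d
   both vanish when the j-th letters agree, are at least 2^(-|j|-1) otherwise
   (midpoints of distinct arcs are 1/2 apart), and are O((|j|+1) 2^(-|j|))
   in any case. *)

From Stdlib Require Import Reals ZArith Lra Lia ClassicalEpsilon FunctionalExtensionality.
From Coquelicot Require Import Coquelicot.
Open Scope R_scope.

Lemma PI_bounds : 3 < PI <= 4.
Proof. split; [generalize PI2_3_2; lra | exact PI_4]. Qed.

Lemma two_over_PI_bounds : / 2 <= 2 / PI < 1.
Proof.
  destruct PI_bounds as [H3 H4].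
  split; [apply (Rmult_le_reg_r PI) | apply (Rmult_lt_reg_r PI)]; try lra;
    unfold Rdiv; rewrite Rmult_assoc, Rinv_l by lra; lra.
Qed.

Lemma Pinf_sin2 x : Pinf x = 2 * sin (PI * x) ^ 2 / PI.
Proof.
  unfold Pinf. replace (2 * PI * x) with (2 * (PI * x)) by ring.
  rewrite cos_2a_sin. field. generalize PI_bounds; lra.
Qed.

Lemma Pinf_ge0 x : 0 <= Pinf x.
Proof.
  rewrite Pinf_sin2. generalize PI_bounds; intros.
  apply Rmult_le_pos; [nra | left; apply Rinv_0_lt_compat; lra].
Qed.

Lemma Pinf_le x : Pinf x <= 2 / PI.
Proof.
  unfold Pinf, Rdiv. generalize PI_bounds (COS_bound (2 * PI * x)); intros.
  apply Rmult_le_compat_r; [left; apply Rinv_0_lt_compat |]; lra.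
Qed.

Lemma Pinf_eq0 x : Pinf x = 0 -> exists k, x = IZR k.
Proof.
  rewrite Pinf_sin2. intros H. generalize PI_bounds; intros.
  assert (Hsin : sin (PI * x) = 0).
  { assert (sin (PI * x) ^ 2 = 0); [|nra].
    apply (Rmult_eq_reg_r (2 / PI)); [rewrite Rmult_0_l, <- H; field; lra |].
    apply Rgt_not_eq. unfold Rdiv. apply Rmult_lt_0_compat; [lra | apply Rinv_0_lt_compat; lra]. }
  destruct (sin_eq_0_0 _ Hsin) as [k Hk]. exists k.
  apply (Rmult_eq_reg_l PI); lra.
Qed.

Lemma Pinf_IZR k : Pinf (IZR k) = 0.
Proof. rewrite Pinf_sin2, sin_eq_0_1 by (exists k; ring). unfold Rdiv. ring. Qed.

Lemma Pinf_eq0_cos x : Pinf x = 0 -> cos (2 * PI * x) = 1.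
Proof.
  unfold Pinf. intros H. generalize PI_bounds; intros.
  assert (1 - cos (2 * PI * x) = 0); [|lra].
  apply (Rmult_eq_reg_r (/ PI)); [rewrite Rmult_0_l; exact H | apply Rinv_neq_0_compat; lra].
Qed.

Lemma IZR_not_between k l : ~ (IZR k < IZR l < IZR k + 1).
Proof.
  intros [H1 H2]. rewrite <- plus_IZR in H2. apply lt_IZR in H1. apply lt_IZR in H2. lia.
Qed.

Lemma Pinf_pos k x : IZR k < x < IZR k + 1 -> 0 < Pinf x.
Proof.
  intros H. destruct (Pinf_ge0 x) as [|E]; auto.
  destruct (Pinf_eq0 x (eq_sym E)) as [l ->]. exfalso; exact (IZR_not_between k l H).
Qed.

Lemma Pinf_add_IZR k w : Pinf (IZR k + w) = Pinf w.
Proof.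
  rewrite !Pinf_sin2. replace (PI * (IZR k + w)) with (IZR k * PI + PI * w) by ring.
  rewrite sin_plus, (sin_eq_0_1 (IZR k * PI)) by (exists k; ring).
  assert (Hc : cos (IZR k * PI) ^ 2 = 1).
  { generalize (sin2_cos2 (IZR k * PI)). rewrite sin_eq_0_1 by (exists k; ring). unfold Rsqr. nra. }
  replace ((0 * cos (PI * w) + cos (IZR k * PI) * sin (PI * w)) ^ 2)
    with (cos (IZR k * PI) ^ 2 * sin (PI * w) ^ 2) by ring.
  rewrite Hc, Rmult_1_l. reflexivity.
Qed.

Lemma Pinf_half k : Pinf (IZR k + / 2) = 2 / PI.
Proof.
  rewrite Pinf_add_IZR, Pinf_sin2. replace (PI * / 2) with (PI / 2) by field.
  rewrite sin_PI2. field. generalize PI_bounds; lra.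
Qed.

Lemma Int_part_bounds t : IZR (Int_part t) <= t < IZR (Int_part t) + 1.
Proof. destruct (base_Int_part t). lra. Qed.

Lemma Int_part_eq z t : IZR z <= t < IZR z + 1 -> Int_part t = z.
Proof. intros H. symmetry. apply Int_part_spec. lra. Qed.

Lemma Z_even_div2 a :
  (Z.even a = true -> a = 2 * (a / 2))%Z /\ (Z.even a = false -> a = 2 * (a / 2) + 1)%Z.
Proof.
  generalize (Zmod_even a) (Z.div_mod a 2). intros H1 H2.
  split; intros E; rewrite E in H1; lia.
Qed.

(* Even arcs lie in the upper half plane and are run rightwards by [Xinf], odd
   arcs in the lower one and are run leftwards by [Yinf]; [arc_pt a u] is the
   point of [I_a] reached at time [u] in [0, 1] from its initial endpoint
   [(arc_start a, 0)]. *)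
Definition arc_x (a : Z) (u : R) : R :=
  if Z.even a then IZR (a / 2) + u else IZR (a / 2) + 1 - u.
Definition arc_pt (a : Z) (u : R) : pt :=
  (arc_x a u, if Z.even a then Pinf (arc_x a u) else - Pinf (arc_x a u)).
Definition arc_start (a : Z) : Z := if Z.even a then (a / 2)%Z else (a / 2 + 1)%Z.
Definition arc_end (a : Z) : Z := if Z.even a then (a / 2 + 1)%Z else (a / 2)%Z.

Definition chained (s : Z -> Z) : Prop := forall j, arc_end (s j) = arc_start (s (j + 1)%Z).

Definition follow (s : Z -> Z) (t : R) : pt := arc_pt (s (Int_part t)) (t - IZR (Int_part t)).

Lemma arc_pt_0 a : arc_pt a 0 = (IZR (arc_start a), 0).
Proof.
  unfold arc_pt, arc_x, arc_start. destruct (Z.even a).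
  - rewrite Rplus_0_r, Pinf_IZR. reflexivity.
  - rewrite Rminus_0_r, <- plus_IZR, Pinf_IZR. f_equal; ring.
Qed.

Lemma arc_pt_1 a : arc_pt a 1 = (IZR (arc_end a), 0).
Proof.
  unfold arc_pt, arc_x, arc_end. destruct (Z.even a).
  - rewrite <- plus_IZR, Pinf_IZR. reflexivity.
  - replace (IZR (a / 2) + 1 - 1) with (IZR (a / 2)) by ring.
    rewrite Pinf_IZR. f_equal; ring.
Qed.

Lemma arc_x_range a u : 0 <= u <= 1 -> IZR (a / 2) <= arc_x a u <= IZR (a / 2) + 1.
Proof. intros. unfold arc_x. destruct (Z.even a); lra. Qed.

Lemma arc_x_half a : arc_x a (/ 2) = IZR (a / 2) + / 2.
Proof. unfold arc_x. destruct (Z.even a); lra. Qed.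

Lemma arc_arc_pt a u : 0 < u < 1 -> arc a (arc_pt a u).
Proof.
  intros Hu. unfold arc, arc_pt, arc_x; simpl. destruct (Z.even a); split; try reflexivity; lra.
Qed.

Lemma arc_pt_Lambda a u : Lambda_inf (arc_pt a u).
Proof. unfold Lambda_inf, arc_pt; simpl. destruct (Z.even a); auto. Qed.

Lemma arc_unique n m p : arc n p -> arc m p -> n = m.
Proof.
  unfold arc. intros [Hn1 Hn2] [Hm1 Hm2].
  assert (Hdiv : (n / 2 = m / 2)%Z).
  { destruct (Z.lt_trichotomy (n / 2) (m / 2)) as [H|[H|H]]; auto; exfalso;
      [assert (L : (n / 2 + 1 <= m / 2)%Z) by lia | assert (L : (m / 2 + 1 <= n / 2)%Z) by lia];
      apply IZR_le in L; rewrite plus_IZR in L; lra. }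
  assert (Pp : 0 < Pinf (fst p)) by (apply (Pinf_pos (n / 2)); lra).
  destruct (Z_even_div2 n) as [En On], (Z_even_div2 m) as [Em Om].
  destruct (Z.even n), (Z.even m); try lra.
  - rewrite (En eq_refl), (Em eq_refl). lia.
  - rewrite (On eq_refl), (Om eq_refl). lia.
Qed.

Lemma follow_on_segment s (Hs : chained s) i t :
  IZR i <= t <= IZR i + 1 -> follow s t = arc_pt (s i) (t - IZR i).
Proof.
  intros [H1 H2]. unfold follow. destruct (Rlt_or_le t (IZR i + 1)).
  - rewrite (Int_part_eq i t) by lra. reflexivity.
  - assert (t = IZR i + 1) by lra. subst t.
    rewrite (Int_part_eq (i + 1) (IZR i + 1)) by (rewrite plus_IZR; lra).
    rewrite plus_IZR, Rminus_diag.
    replace (IZR i + 1 - IZR i) with 1 by ring.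
    rewrite arc_pt_0, arc_pt_1, Hs. reflexivity.
Qed.

Lemma follow_succ s t : follow s (t + 1) = follow (sigma_shift s) t.
Proof.
  unfold follow, sigma_shift. destruct (Int_part_bounds t).
  rewrite (Int_part_eq (Int_part t + 1) (t + 1)) by (rewrite plus_IZR; lra).
  rewrite plus_IZR. f_equal. ring.
Qed.

Lemma chained_shift s : chained s -> chained (sigma_shift s).
Proof. intros Hs j. unfold sigma_shift. rewrite Hs. reflexivity. Qed.

(** * Invariance of [Lambda_inf] *)

Definition continuous_path (g : R -> pt) : Prop :=
  forall t, continuity_pt (fun s => fst (g s)) t /\ continuity_pt (fun s => snd (g s)) t.

Lemma derivable_pt_lim_0_const (f : R -> R) a b :
  (forall t, a < t < b -> derivable_pt_lim f t 0) ->
  (forall t, a <= t <= b -> continuity_pt f t) ->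
  forall t, a <= t <= b -> f t = f a.
Proof.
  intros Hd Hc t Ht.
  set (pr := fun x (P : a < x < b) => exist (fun l => derivable_pt_lim f x l) 0 (Hd x P)).
  apply (null_derivative_loc f a b pr Hc); [intros; reflexivity | exact Ht].
Qed.

Lemma continuity_pt_cos_comp (f : R -> R) t :
  continuity_pt f t -> continuity_pt (fun s => cos (2 * PI * f s)) t.
Proof.
  intros H. apply (continuity_pt_comp (fun s => 2 * PI * f s) cos);
    [apply continuity_pt_scal, H | apply continuity_cos].
Qed.

Lemma derivable_pt_lim_cos_comp (f : R -> R) t l : derivable_pt_lim f t l ->
  derivable_pt_lim (fun s => cos (2 * PI * f s)) t (- sin (2 * PI * f t) * (2 * PI * l)).
Proof.
  intros H. apply (derivable_pt_lim_comp (fun s => 2 * PI * f s) cos);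
    [apply derivable_pt_lim_scal, H | apply derivable_pt_lim_cos].
Qed.

Lemma Xinf_first_integrals g a b : continuous_path g -> is_solution Xinf g a b ->
  forall t, a <= t <= b -> fst (g t) - t = fst (g a) - a /\
    snd (g t) + / PI * cos (2 * PI * fst (g t)) = snd (g a) + / PI * cos (2 * PI * fst (g a)).
Proof.
  intros Hc [Hab Hs] t Ht. split.
  - apply (derivable_pt_lim_0_const (fun s => fst (g s) - s) a b); auto.
    + intros u Hu. destruct (Hs u Hu) as [Hx _]; simpl in Hx.
      replace 0 with (1 - 1) by ring.
      apply derivable_pt_lim_minus; [exact Hx | apply derivable_pt_lim_id].
    + intros u _. apply continuity_pt_minus; [apply Hc | apply continuity_pt_id].
  - apply (derivable_pt_lim_0_const
             (fun s => snd (g s) + / PI * cos (2 * PI * fst (g s))) a b); auto.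
    + intros u Hu. destruct (Hs u Hu) as [Hx Hy]; simpl in Hx, Hy.
      replace 0 with (2 * sin (2 * PI * fst (g u))
                      + / PI * (- sin (2 * PI * fst (g u)) * (2 * PI * 1)))
        by (field; generalize PI_RGT_0; lra).
      apply derivable_pt_lim_plus;
        [exact Hy | apply derivable_pt_lim_scal, derivable_pt_lim_cos_comp, Hx].
    + intros u _. apply continuity_pt_plus; [apply Hc |].
      apply continuity_pt_scal, continuity_pt_cos_comp, Hc.
Qed.

Lemma Yinf_first_integrals g a b : continuous_path g -> is_solution Yinf g a b ->
  forall t, a <= t <= b -> fst (g t) + t = fst (g a) + a /\
    snd (g t) - / PI * cos (2 * PI * fst (g t)) = snd (g a) - / PI * cos (2 * PI * fst (g a)).
Proof.
  intros Hc [Hab Hs] t Ht. split.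
  - apply (derivable_pt_lim_0_const (fun s => fst (g s) + s) a b); auto.
    + intros u Hu. destruct (Hs u Hu) as [Hx _]; simpl in Hx.
      replace 0 with (-1 + 1) by ring.
      apply derivable_pt_lim_plus; [exact Hx | apply derivable_pt_lim_id].
    + intros u _. apply continuity_pt_plus; [apply Hc | apply continuity_pt_id].
  - apply (derivable_pt_lim_0_const
             (fun s => snd (g s) - / PI * cos (2 * PI * fst (g s))) a b); auto.
    + intros u Hu. destruct (Hs u Hu) as [Hx Hy]; simpl in Hx, Hy.
      replace 0 with (2 * sin (2 * PI * fst (g u))
                      - / PI * (- sin (2 * PI * fst (g u)) * (2 * PI * -1)))
        by (field; generalize PI_RGT_0; lra).
      apply derivable_pt_lim_minus;
        [exact Hy | apply derivable_pt_lim_scal, derivable_pt_lim_cos_comp, Hx].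
    + intros u _. apply continuity_pt_minus; [apply Hc |].
      apply continuity_pt_scal, continuity_pt_cos_comp, Hc.
Qed.

Lemma Zinf_no_sliding_closure p : ~ sl_es_closure Xinf Yinf p.
Proof.
  intros H. destruct (H 1 Rlt_0_1) as [q [[[_ Hq]|[_ Hq]] _]];
    unfold Wf, Xinf, Yinf in Hq; simpl in Hq; lra.
Qed.

Lemma Lambda_upper p : Lambda_inf p -> snd p >= 0 -> snd p = Pinf (fst p).
Proof. intros [H|H] H'; auto. generalize (Pinf_ge0 (fst p)); lra. Qed.

Lemma Lambda_lower p : Lambda_inf p -> snd p <= 0 -> snd p = - Pinf (fst p).
Proof. intros [H|H] H'; auto. generalize (Pinf_ge0 (fst p)); lra. Qed.

Lemma Lambda_on_Sigma p : Lambda_inf p -> snd p = 0 -> Pinf (fst p) = 0.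
Proof. intros [H|H] H'; lra. Qed.

(* On [Lambda_inf], a tangency of [Xinf] sits at an integer abscissa, where
   [X^2 f = 4 PI > 0]: a visible fold. *)
Lemma Lambda_no_singular_tangency p : singular_tangency Xinf Yinf p -> ~ Lambda_inf p.
Proof.
  intros [Hs [_ [_ [[v [Hv Hneg]] _]]]] HL.
  assert (Hcos : cos (2 * PI * fst p) = 1) by (apply Pinf_eq0_cos, Lambda_on_Sigma; auto).
  unfold W2f_is, Wf, Xinf in Hv; simpl in Hv.
  assert (Hd : is_derive (fun s => 2 * sin (2 * PI * (fst p + s * 1))) 0 (4 * PI)).
  { auto_derive; auto. rewrite Rmult_0_l, Rplus_0_r, Hcos. ring. }
  apply is_derive_Reals in Hd.
  generalize (uniqueness_limite _ _ _ _ Hv Hd) PI_bounds. lra.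
Qed.

Section Partition.
Variable tau : Z -> R.
Hypothesis tau_S : forall i, tau i < tau (i + 1)%Z.
Hypothesis tau_unbounded_above : forall M, exists i, tau i > M.
Hypothesis tau_unbounded_below : forall M, exists i, tau i < M.

Lemma tau_lt i j : (i < j)%Z -> tau i < tau j.
Proof.
  intros H. replace j with (i + Z.of_nat (S (Z.to_nat (j - i - 1))))%Z by lia.
  induction (Z.to_nat (j - i - 1)) as [|n IH].
  - replace (i + Z.of_nat 1)%Z with (i + 1)%Z by lia. apply tau_S.
  - replace (i + Z.of_nat (S (S n)))%Z with (i + Z.of_nat (S n) + 1)%Z by lia.
    eapply Rlt_trans; [exact IH | apply tau_S].
Qed.

Lemma tau_le i j : (i <= j)%Z -> tau i <= tau j.
Proof. intros H. destruct (Z.eq_dec i j); [subst; lra | left; apply tau_lt; lia]. Qed.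

Lemma tau_locate t : exists i, tau i <= t < tau (i + 1)%Z.
Proof.
  destruct (tau_unbounded_below t) as [j Hj], (tau_unbounded_above t) as [k Hk].
  assert (Hjk : (j < k)%Z).
  { destruct (Z_lt_le_dec j k) as [|L]; auto. generalize (tau_le k j L); lra. }
  assert (Walk : forall n j, tau j <= t -> t < tau (j + Z.of_nat n)%Z ->
                 exists i, tau i <= t < tau (i + 1)%Z).
  { induction n as [|n IH]; intros j' H1 H2.
    - rewrite Z.add_0_r in H2. lra.
    - destruct (Rlt_or_le t (tau (j' + 1)%Z)); [exists j'; split; auto |].
      apply (IH (j' + 1)%Z); auto.
      replace (j' + 1 + Z.of_nat n)%Z with (j' + Z.of_nat (S n))%Z by lia. exact H2. }
  apply (Walk (Z.to_nat (k - j)) j); [lra |].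
  replace (j + Z.of_nat (Z.to_nat (k - j)))%Z with k by lia. lra.
Qed.

Lemma tau_propagate (P : R -> Prop) :
  (forall i c, tau i <= c <= tau (i + 1)%Z -> P c ->
     forall s, tau i <= s <= tau (i + 1)%Z -> P s) ->
  forall t0, P t0 -> forall t, P t.
Proof.
  intros Hp t0 H0 t. destruct (tau_locate t0) as [i0 Hi0].
  assert (Grow : forall n : nat, forall s,
    tau (i0 - Z.of_nat n)%Z <= s <= tau (i0 + 1 + Z.of_nat n)%Z -> P s).
  { induction n as [|n IH]; intros s Hs.
    - rewrite Z.sub_0_r, Z.add_0_r in Hs. apply (Hp i0 t0); auto. lra.
    - assert (Elo : (i0 - Z.of_nat (S n) + 1 = i0 - Z.of_nat n)%Z) by lia.
      assert (Ehi : (i0 + 1 + Z.of_nat (S n) = i0 + 1 + Z.of_nat n + 1)%Z) by lia.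
      assert (Hlo : tau (i0 - Z.of_nat (S n))%Z <= tau (i0 - Z.of_nat n)%Z)
        by (apply tau_le; lia).
      assert (Hmid : tau (i0 - Z.of_nat n)%Z <= tau (i0 + 1 + Z.of_nat n)%Z)
        by (apply tau_le; lia).
      assert (Hhi := tau_S (i0 + 1 + Z.of_nat n)).
      rewrite Ehi in Hs.
      destruct (Rlt_or_le s (tau (i0 - Z.of_nat n)%Z));
        [|destruct (Rle_or_lt s (tau (i0 + 1 + Z.of_nat n)%Z))].
      + apply (Hp (i0 - Z.of_nat (S n))%Z (tau (i0 - Z.of_nat n)%Z));
          [rewrite Elo; lra | apply IH; lra | rewrite Elo; lra].
      + apply IH; lra.
      + apply (Hp (i0 + 1 + Z.of_nat n)%Z (tau (i0 + 1 + Z.of_nat n)%Z));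
          [lra | apply IH; lra | lra]. }
  destruct (tau_locate t) as [i Hi].
  apply (Grow (Z.to_nat (Z.abs (i - i0)))). split.
  - apply Rle_trans with (tau i); [apply tau_le; lia | lra].
  - apply Rle_trans with (tau (i + 1)%Z); [lra | apply tau_le; lia].
Qed.
End Partition.

Lemma trajectory_propagate (g : R -> pt) (P : R -> Prop) :
  global_trajectory Xinf Yinf g ->
  (forall a b, local_piece Xinf Yinf g a b ->
     forall c, a <= c <= b -> P c -> forall s, a <= s <= b -> P s) ->
  P 0 -> forall t, P t.
Proof.
  intros [_ [tau [HS [Hup [Hdown Hp]]]]] Hpiece H0.
  apply (tau_propagate tau HS Hup Hdown P) with 0; auto.
  intros i. apply Hpiece, Hp.
Qed.

Lemma local_piece_Lambda g a b : continuous_path g -> local_piece Xinf Yinf g a b ->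
  forall c, a <= c <= b -> Lambda_inf (g c) -> forall s, a <= s <= b -> Lambda_inf (g s).
Proof.
  intros Hc Hp c Hc_ab Hlc s Hs.
  destruct Hp as [[HX Hup]|[[HY Hdown]|[[_ Hcl]|[_ [p [Hsg Hcst]]]]]].
  - destruct (Xinf_first_integrals g a b Hc HX s Hs) as [_ E1].
    destruct (Xinf_first_integrals g a b Hc HX c Hc_ab) as [_ E2].
    assert (Ec := Lambda_upper _ Hlc (Hup c Hc_ab)). unfold Pinf in *.
    left; unfold Pinf. apply (Rplus_eq_reg_r (/ PI * cos (2 * PI * fst (g s)))).
    rewrite E1, <- E2, Ec. field. generalize PI_bounds; lra.
  - destruct (Yinf_first_integrals g a b Hc HY s Hs) as [_ E1].
    destruct (Yinf_first_integrals g a b Hc HY c Hc_ab) as [_ E2].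
    assert (Ec := Lambda_lower _ Hlc (Hdown c Hc_ab)). unfold Pinf in *.
    right; unfold Pinf. apply (Rplus_eq_reg_r (- (/ PI * cos (2 * PI * fst (g s))))).
    rewrite <- !Rminus_def, E1, <- E2, Ec. field. generalize PI_bounds; lra.
  - exfalso. exact (Zinf_no_sliding_closure _ (Hcl c Hc_ab)).
  - exfalso. rewrite (Hcst c Hc_ab) in Hlc. exact (Lambda_no_singular_tangency p Hsg Hlc).
Qed.

Theorem Lambda_inf_invariant : invariant Xinf Yinf Lambda_inf.
Proof.
  intros g Hg H0. apply (trajectory_propagate g (fun t => Lambda_inf (g t)) Hg); auto.
  intros a b. apply local_piece_Lambda. exact (proj1 Hg).
Qed.

(** * Phases and itineraries *)

(* On [Sigma], where [x] is an
   integer, the two clauses hold together, which lets the phase pass from an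
   upper arc to a lower one. *)
Definition phase_locked (g : R -> pt) (psi t : R) : Prop :=
  (snd (g t) >= 0 -> exists z, fst (g t) - (t + psi) = IZR z) /\
  (snd (g t) <= 0 -> exists z, fst (g t) + (t + psi) = IZR z).

Lemma local_piece_phase_locked g psi a b : continuous_path g ->
  local_piece Xinf Yinf g a b -> (forall t, Lambda_inf (g t)) ->
  forall c, a <= c <= b -> phase_locked g psi c ->
  forall s, a <= s <= b -> phase_locked g psi s.
Proof.
  intros Hc Hp HL c Hc_ab [Hup_c Hdown_c] s Hs.
  assert (Hint : snd (g s) = 0 -> exists k, fst (g s) = IZR k)
    by (intros Hy; apply Pinf_eq0, Lambda_on_Sigma; auto).
  destruct Hp as [[HX Hup]|[[HY Hdown]|[[_ Hcl]|[_ [p [Hsg Hcst]]]]]].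
  - destruct (Xinf_first_integrals g a b Hc HX s Hs) as [E1 _].
    destruct (Xinf_first_integrals g a b Hc HX c Hc_ab) as [E2 _].
    destruct (Hup_c (Hup c Hc_ab)) as [z Hz]. split.
    + intros _. exists z. lra.
    + intros Hle. destruct Hint as [k Hk]; [generalize (Hup s Hs); unfold inSigmaPlus; lra |].
      exists (2 * k - z)%Z. rewrite minus_IZR, mult_IZR. lra.
  - destruct (Yinf_first_integrals g a b Hc HY s Hs) as [E1 _].
    destruct (Yinf_first_integrals g a b Hc HY c Hc_ab) as [E2 _].
    destruct (Hdown_c (Hdown c Hc_ab)) as [z Hz]. split.
    + intros Hge. destruct Hint as [k Hk]; [generalize (Hdown s Hs); unfold inSigmaMinus; lra |].
      exists (2 * k - z)%Z. rewrite minus_IZR, mult_IZR. lra.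
    + intros _. exists z. lra.
  - exfalso. exact (Zinf_no_sliding_closure _ (Hcl c Hc_ab)).
  - exfalso. generalize (HL c). rewrite (Hcst c Hc_ab). exact (Lambda_no_singular_tangency p Hsg).
Qed.

Lemma phase_locked_at_0 g : Lambda_inf (g 0) -> exists psi, 0 <= psi < 1 /\ phase_locked g psi 0.
Proof.
  intros HL. destruct (Rle_or_lt 0 (snd (g 0))) as [Hy|Hy].
  - exists (fst (g 0) - IZR (Int_part (fst (g 0)))).
    destruct (Int_part_bounds (fst (g 0))). split; [lra | split].
    + intros _. exists (Int_part (fst (g 0))). ring.
    + intros Hle. destruct (Pinf_eq0 _ (Lambda_on_Sigma _ HL ltac:(lra))) as [k Hk].
      rewrite Hk, (Int_part_eq k (IZR k)) by lra. exists k. ring.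
  - exists (- fst (g 0) - IZR (Int_part (- fst (g 0)))).
    destruct (Int_part_bounds (- fst (g 0))). split; [lra | split].
    + intros; lra.
    + intros _. exists (Z.opp (Int_part (- fst (g 0)))). rewrite opp_IZR. ring.
Qed.

Lemma continuity_pt_add_const c t : continuity_pt (fun s => s + c) t.
Proof.
  apply continuity_pt_plus; [apply continuity_pt_id |].
  apply continuity_pt_const. intros ? ?. reflexivity.
Qed.

Lemma continuous_integer_valued_const (f : R -> R) a b : continuity f -> a <= b ->
  (forall t, a <= t <= b -> exists z, f t = IZR z) -> forall t, a <= t <= b -> f t = f a.
Proof.
  intros Hc Hab Hint t Ht.
  destruct (Hint a (conj (Rle_refl a) Hab)) as [za Ha], (Hint t Ht) as [zt Hzt].
  destruct (Z.eq_dec za zt) as [<-|NE]; [congruence |].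
  assert (Hat : a < t).
  { destruct Ht as [[Hat|<-] _]; auto. exfalso; apply NE, eq_IZR. congruence. }
  exfalso. destruct (Z_lt_le_dec za zt) as [L|L].
  - assert (HL : (za + 1 <= zt)%Z) by lia. apply IZR_le in HL. rewrite plus_IZR in HL.
    destruct (IVT (fun r => f r - (IZR za + / 2)) a t) as [c [Hc1 Hc2]]; try lra.
    + intros x. apply continuity_pt_minus; [apply Hc |].
      apply continuity_pt_const. intros ? ?. reflexivity.
    + destruct (Hint c) as [zc Hzc]; [lra |]. apply (IZR_not_between za zc). lra.
  - assert (HL : (zt + 1 <= za)%Z) by lia. apply IZR_le in HL. rewrite plus_IZR in HL.
    destruct (IVT (fun r => (IZR za - / 2) - f r) a t) as [c [Hc1 Hc2]]; try lra.
    + intros x. apply continuity_pt_minus; [|apply Hc].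
      apply continuity_pt_const. intros ? ?. reflexivity.
    + destruct (Hint c) as [zc Hzc]; [lra |]. apply (IZR_not_between (za - 1) zc).
      rewrite minus_IZR. lra.
Qed.

Lemma continuous_nonvanishing_sign (f : R -> R) a b m : continuity f -> a < m < b ->
  (forall c, a < c < b -> f c <> 0) -> f m > 0 -> forall t, a <= t <= b -> f t >= 0.
Proof.
  intros Hc Hm Hnz Hfm t Ht. destruct (Rle_or_lt 0 (f t)) as [|Hft]; [lra | exfalso].
  destruct (Rlt_or_le t m) as [Htm|Htm].
  - destruct (IVT f t m Hc Htm Hft Hfm) as [c [Hc1 Hc2]].
    assert (c <> t) by (intros ->; lra). assert (c <> m) by (intros ->; lra).
    apply (Hnz c); [lra | lra].
  - assert (m < t) by (destruct Htm as [Hlt | ->]; lra).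
    destruct (IVT (fun r => - f r) m t) as [c [Hc1 Hc2]]; try lra.
    + intros x. apply continuity_pt_opp, Hc.
    + assert (c <> m) by (intros ->; lra). assert (c <> t) by (intros ->; lra).
      apply (Hnz c); [lra | lra].
Qed.

Lemma Z_div2_double k : ((2 * k) / 2 = k)%Z.
Proof. rewrite Z.mul_comm. apply Z.div_mul. lia. Qed.

Lemma Z_div2_double_succ k : ((2 * k + 1) / 2 = k)%Z.
Proof. rewrite Z.mul_comm, Z.div_add_l by lia. change (1 / 2)%Z with 0%Z. lia. Qed.

Section Phase.
Variable g : R -> pt.
Hypothesis g_cont : continuous_path g.
Hypothesis g_Lambda : forall t, Lambda_inf (g t).
Variable psi : R.
Hypothesis g_phase : forall t, phase_locked g psi t.

Lemma phase_off_Sigma n c : IZR n - psi < c < IZR n - psi + 1 -> snd (g c) <> 0.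
Proof.
  intros Hc Hy. destruct (Pinf_eq0 _ (Lambda_on_Sigma _ (g_Lambda c) Hy)) as [k Hk].
  destruct (g_phase c) as [Hup _]. destruct (Hup (Req_ge _ _ Hy)) as [z Hz].
  apply (IZR_not_between n (k - z)). rewrite minus_IZR. lra.
Qed.

Lemma phase_sign_on_unit_interval n :
  (forall t, IZR n - psi <= t <= IZR n - psi + 1 -> snd (g t) >= 0) \/
  (forall t, IZR n - psi <= t <= IZR n - psi + 1 -> snd (g t) <= 0).
Proof.
  set (t0 := IZR n - psi).
  assert (Hy : continuity (fun s => snd (g s))) by (intros x; apply g_cont).
  assert (Hnz : forall c, t0 < c < t0 + 1 -> snd (g c) <> 0)
    by (intros; apply (phase_off_Sigma n); auto).
  assert (Hm : t0 < t0 + / 2 < t0 + 1) by lra.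
  destruct (Rtotal_order 0 (snd (g (t0 + / 2)))) as [Hpos|[E|Hneg]].
  - left. apply (continuous_nonvanishing_sign _ t0 (t0 + 1) (t0 + / 2) Hy Hm Hnz Hpos).
  - exfalso. apply (Hnz (t0 + / 2)); auto.
  - right. intros t Ht. assert (- snd (g t) >= 0); [|lra].
    apply (continuous_nonvanishing_sign (fun t => - snd (g t)) t0 (t0 + 1) (t0 + / 2)); auto.
    + intros x. apply continuity_pt_opp, Hy.
    + intros c Hc E. apply (Hnz c Hc). lra.
    + lra.
Qed.

Lemma phase_upper_arc n :
  (forall t, IZR n - psi <= t <= IZR n - psi + 1 -> snd (g t) >= 0) ->
  exists a, forall u, 0 <= u <= 1 -> g (IZR n - psi + u) = arc_pt a u.
Proof.
  set (t0 := IZR n - psi). intros Hup.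
  destruct (g_phase t0) as [Hph _]. destruct (Hph (Hup t0 ltac:(lra))) as [z0 Hz0].
  exists (2 * (n + z0))%Z. intros u Hu.
  assert (Ex : fst (g (t0 + u)) - (t0 + u + psi) = fst (g t0) - (t0 + psi)).
  { apply (continuous_integer_valued_const (fun t => fst (g t) - (t + psi)) t0 (t0 + 1)); try lra.
    - intros x. apply continuity_pt_minus; [apply g_cont | apply continuity_pt_add_const].
    - intros t Ht. apply (g_phase t), Hup, Ht. }
  assert (Ex' : fst (g (t0 + u)) = IZR (n + z0) + u) by (rewrite plus_IZR; unfold t0 in *; lra).
  unfold arc_pt, arc_x. rewrite Z.even_even, Z_div2_double.
  apply injective_projections; simpl; [exact Ex' |].
  rewrite <- Ex'. apply Lambda_upper; [apply g_Lambda | apply Hup; lra].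
Qed.

Lemma phase_lower_arc n :
  (forall t, IZR n - psi <= t <= IZR n - psi + 1 -> snd (g t) <= 0) ->
  exists a, forall u, 0 <= u <= 1 -> g (IZR n - psi + u) = arc_pt a u.
Proof.
  set (t0 := IZR n - psi). intros Hdown.
  destruct (g_phase t0) as [_ Hph]. destruct (Hph (Hdown t0 ltac:(lra))) as [z0 Hz0].
  exists (2 * (z0 - n - 1) + 1)%Z. intros u Hu.
  assert (Ex : fst (g (t0 + u)) + (t0 + u + psi) = fst (g t0) + (t0 + psi)).
  { apply (continuous_integer_valued_const (fun t => fst (g t) + (t + psi)) t0 (t0 + 1)); try lra.
    - intros x. apply continuity_pt_plus; [apply g_cont | apply continuity_pt_add_const].
    - intros t Ht. apply (g_phase t), Hdown, Ht. }
  assert (Ex' : fst (g (t0 + u)) = IZR (z0 - n - 1) + 1 - u)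
    by (rewrite !minus_IZR; unfold t0 in *; lra).
  unfold arc_pt, arc_x. rewrite Z.even_odd, Z_div2_double_succ.
  apply injective_projections; simpl; [exact Ex' |].
  rewrite <- Ex'. apply Lambda_lower; [apply g_Lambda | apply Hdown; lra].
Qed.

Lemma phase_unit_interval_on_arc n :
  exists a, forall u, 0 <= u <= 1 -> g (IZR n - psi + u) = arc_pt a u.
Proof.
  destruct (phase_sign_on_unit_interval n);
    [apply phase_upper_arc | apply phase_lower_arc]; assumption.
Qed.
End Phase.

Theorem Omega_inf_follow g : Omega_inf g ->
  exists s psi, chained s /\ 0 <= psi < 1 /\ forall t, g t = follow s (t + psi).
Proof.
  intros [Hg H0].
  assert (HL : forall t, Lambda_inf (g t))
    by (intros; apply (Lambda_inf_invariant g Hg H0)).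
  destruct (phase_locked_at_0 g H0) as [psi [Hpsi Hph0]].
  assert (Hph : forall t, phase_locked g psi t).
  { apply (trajectory_propagate g (phase_locked g psi) Hg); auto.
    intros a b Hp. exact (local_piece_phase_locked g psi a b (proj1 Hg) Hp HL). }
  set (on_arc n a := forall u, 0 <= u <= 1 -> g (IZR n - psi + u) = arc_pt a u).
  set (s n := epsilon (inhabits 0%Z) (on_arc n)).
  assert (Hs : forall n, on_arc n (s n)).
  { intros n. apply epsilon_spec, (phase_unit_interval_on_arc g (proj1 Hg) HL psi Hph n). }
  exists s, psi. split; [|split; auto].
  - intros j. assert (E1 := Hs j 1 ltac:(lra)). assert (E2 := Hs (j + 1)%Z 0 ltac:(lra)).
    rewrite plus_IZR in E2. replace (IZR j + 1 - psi + 0) with (IZR j - psi + 1) in E2 by ring.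
    rewrite E1, arc_pt_1, arc_pt_0 in E2. apply eq_IZR. exact (f_equal fst E2).
  - intros t. unfold follow. destruct (Int_part_bounds (t + psi)).
    replace t with (IZR (Int_part (t + psi)) - psi + (t + psi - IZR (Int_part (t + psi))))
      at 1 by ring.
    apply Hs. lra.
Qed.

Lemma arc_x_derive a c t : is_derive (fun r => arc_x a (r - c)) t (if Z.even a then 1 else -1).
Proof. unfold arc_x. destruct (Z.even a); auto_derive; auto; ring. Qed.

Lemma arc_y_derive a c t :
  is_derive (fun r => snd (arc_pt a (r - c))) t (2 * sin (2 * PI * arc_x a (t - c))).
Proof.
  unfold arc_pt, arc_x, Pinf. destruct (Z.even a); simpl; auto_derive; auto;
    unfold Rminus; field; generalize PI_bounds; lra.
Qed.

Lemma continuity_pt_of_is_derive (f : R -> R) t l : is_derive f t l -> continuity_pt f t.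
Proof.
  intros H. apply continuity_pt_filterlim.
  apply (ex_derive_continuous (K := R_AbsRing) (V := R_NormedModule)). exists l. exact H.
Qed.

Lemma continuity_pt_glue (f1 f2 h : R -> R) n d : 0 < d ->
  continuity_pt f1 n -> continuity_pt f2 n ->
  (forall r, n - d < r <= n -> h r = f1 r) -> (forall r, n <= r < n + d -> h r = f2 r) ->
  continuity_pt h n.
Proof.
  intros Hd H1 H2 L1 L2 eps Heps.
  destruct (H1 eps Heps) as [a1 [Ha1 Ha1']], (H2 eps Heps) as [a2 [Ha2 Ha2']].
  exists (Rmin (Rmin a1 a2) d). split; [apply Rmin_pos; [apply Rmin_pos|]; auto |].
  intros x [Dx Hx]. simpl in *. unfold R_dist in *.
  assert (Hmin := Rmin_l (Rmin a1 a2) d). assert (Hmin' := Rmin_r (Rmin a1 a2) d).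
  assert (Hmin1 := Rmin_l a1 a2). assert (Hmin2 := Rmin_r a1 a2).
  assert (Hxd : Rabs (x - n) < d) by lra. apply Rabs_def2 in Hxd.
  destruct (Rle_or_lt x n).
  - rewrite L1, (L1 n) by lra. apply Ha1'. split; [auto | lra].
  - rewrite L2, (L2 n) by lra. apply Ha2'. split; [auto | lra].
Qed.

Section Follow.
Variable s : Z -> Z.
Hypothesis s_chained : chained s.

Lemma follow_interior_derive i t : IZR i < t < IZR i + 1 ->
  is_derive (fun r => fst (follow s r)) t (if Z.even (s i) then 1 else -1) /\
  is_derive (fun r => snd (follow s r)) t (2 * sin (2 * PI * fst (follow s t))).
Proof.
  intros Ht.
  assert (Hd : 0 < Rmin (t - IZR i) (IZR i + 1 - t)) by (apply Rmin_pos; lra).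
  assert (Hloc : locally t (fun r => arc_pt (s i) (r - IZR i) = follow s r)).
  { exists (mkposreal _ Hd). intros r Hr.
    change (Rabs (r - t) < Rmin (t - IZR i) (IZR i + 1 - t)) in Hr.
    assert (Hm1 := Rmin_l (t - IZR i) (IZR i + 1 - t)).
    assert (Hm2 := Rmin_r (t - IZR i) (IZR i + 1 - t)).
    apply Rabs_def2 in Hr. symmetry. apply follow_on_segment; auto. lra. }
  rewrite (follow_on_segment s s_chained i t) by lra. split.
  - apply (is_derive_ext_loc (fun r => arc_x (s i) (r - IZR i))); [|apply arc_x_derive].
    revert Hloc. apply filter_imp. intros r <-. reflexivity.
  - apply (is_derive_ext_loc (fun r => snd (arc_pt (s i) (r - IZR i)))); [|apply arc_y_derive].
    revert Hloc. apply filter_imp. intros r <-. reflexivity.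
Qed.

Lemma follow_continuous : continuous_path (follow s).
Proof.
  intros t. destruct (Int_part_bounds t) as [[Hlt|Heq] Hup].
  - destruct (follow_interior_derive (Int_part t) t) as [Dx Dy]; [lra |].
    split; eapply continuity_pt_of_is_derive; eassumption.
  - set (n := Int_part t) in *. rewrite <- Heq.
    assert (L1 : forall r, IZR n - 1 < r <= IZR n ->
                 follow s r = arc_pt (s (n - 1)%Z) (r - IZR (n - 1))).
    { intros r Hr. apply follow_on_segment; auto. rewrite minus_IZR. lra. }
    assert (L2 : forall r, IZR n <= r < IZR n + 1 -> follow s r = arc_pt (s n) (r - IZR n)).
    { intros r Hr. apply follow_on_segment; auto. lra. }
    split.
    + apply (continuity_pt_glue (fun r => arc_x (s (n - 1)%Z) (r - IZR (n - 1)))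
               (fun r => arc_x (s n) (r - IZR n)) _ _ 1 Rlt_0_1).
      * exact (continuity_pt_of_is_derive _ _ _ (arc_x_derive _ _ _)).
      * exact (continuity_pt_of_is_derive _ _ _ (arc_x_derive _ _ _)).
      * intros r Hr. rewrite L1 by lra. reflexivity.
      * intros r Hr. rewrite L2 by lra. reflexivity.
    + apply (continuity_pt_glue (fun r => snd (arc_pt (s (n - 1)%Z) (r - IZR (n - 1))))
               (fun r => snd (arc_pt (s n) (r - IZR n))) _ _ 1 Rlt_0_1).
      * exact (continuity_pt_of_is_derive _ _ _ (arc_y_derive _ _ _)).
      * exact (continuity_pt_of_is_derive _ _ _ (arc_y_derive _ _ _)).
      * intros r Hr. rewrite L1 by lra. reflexivity.
      * intros r Hr. rewrite L2 by lra. reflexivity.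
Qed.

Lemma follow_local_piece i : local_piece Xinf Yinf (follow s) (IZR i) (IZR (i + 1)).
Proof.
  rewrite plus_IZR.
  assert (Hseg : forall t, IZR i <= t <= IZR i + 1 -> follow s t = arc_pt (s i) (t - IZR i))
    by (intros; apply follow_on_segment; auto).
  assert (Hd := follow_interior_derive i).
  unfold is_solution; simpl.
  destruct (Z.even (s i)) eqn:E; [left | right; left]; (split; [split; [lra |] |]).
  - intros t Ht. destruct (Hd t Ht) as [Dx Dy].
    split; apply is_derive_Reals; assumption.
  - intros t Ht. rewrite Hseg by auto. unfold inSigmaPlus, arc_pt. rewrite E.
    apply Rle_ge, Pinf_ge0.
  - intros t Ht. destruct (Hd t Ht) as [Dx Dy].
    split; apply is_derive_Reals; assumption.
  - intros t Ht. rewrite Hseg by auto. unfold inSigmaMinus, arc_pt. rewrite E. cbn [snd].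
    generalize (Pinf_ge0 (arc_x (s i) (t - IZR i))). lra.
Qed.

Lemma follow_Omega_inf : Omega_inf (follow s).
Proof.
  split; [split; [exact follow_continuous |] | apply arc_pt_Lambda].
  exists IZR. split; [|split; [|split]].
  - intros i. apply IZR_lt. lia.
  - intros M. exists (up M). destruct (archimed M); lra.
  - intros M. exists (up M - 2)%Z. rewrite minus_IZR. destruct (archimed M); lra.
  - exact follow_local_piece.
Qed.

End Follow.

Lemma follow_itinerary s psi g : chained s -> 0 <= psi < 1 ->
  (forall t, g t = follow s (t + psi)) ->
  itinerary g s /\ forall s', itinerary g s' -> s' = s.
Proof.
  intros Hs Hpsi Hg.
  assert (Gj : forall j, g (IZR j) = arc_pt (s j) psi).
  { intros j. rewrite Hg, (follow_on_segment s Hs j) by lra. f_equal. ring. }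
  destruct (Req_dec psi 0) as [E|NE].
  - assert (Gh : forall j, g (IZR j + / 2) = arc_pt (s j) (/ 2)).
    { intros j. rewrite Hg, (follow_on_segment s Hs j) by lra. f_equal. rewrite E. ring. }
    split.
    + intros j. right. exists (arc_start (s j)). rewrite Gj, E, arc_pt_0, Gh.
      split; [reflexivity | apply arc_arc_pt; lra].
    + intros s' Hs'. apply functional_extensionality. intros j.
      destruct (Hs' j) as [A|[l [_ B]]].
      * exfalso. rewrite Gj, E, arc_pt_0 in A. destruct A as [A _].
        exact (IZR_not_between _ _ A).
      * rewrite Gh in B. apply (arc_unique _ _ _ B), arc_arc_pt. lra.
  - assert (Hp : 0 < psi < 1) by lra. split.
    + intros j. left. rewrite Gj. apply arc_arc_pt, Hp.
    + intros s' Hs'. apply functional_extensionality. intros j.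
      destruct (Hs' j) as [A|[l [A _]]].
      * rewrite Gj in A. apply (arc_unique _ _ _ A), arc_arc_pt, Hp.
      * exfalso. destruct (arc_arc_pt (s j) psi Hp) as [C _].
        rewrite <- Gj, A in C. exact (IZR_not_between _ _ C).
Qed.

Definition itin (g : R -> pt) : Z -> Z := epsilon (inhabits (fun _ => 0%Z)) (itinerary g).

Lemma itin_follow s psi g : chained s -> 0 <= psi < 1 ->
  (forall t, g t = follow s (t + psi)) -> itin g = s.
Proof.
  intros Hs Hp Hg. destruct (follow_itinerary s psi g Hs Hp Hg) as [I U].
  apply U. unfold itin. apply epsilon_spec. exists s. exact I.
Qed.

Lemma rep_follow g s psi : Omega_inf g -> chained s -> 0 <= psi < 1 ->
  (forall t, g t = follow s (t + psi)) -> rep g = follow s.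
Proof.
  intros Hg Hs Hp Hgs.
  assert (Hf0 : forall t, follow s t = follow s (t + 0)) by (intros; f_equal; ring).
  assert (Hr : is_rep g (rep g)).
  { unfold rep. apply epsilon_spec. exists (follow s).
    split; [apply follow_Omega_inf; auto | split].
    - exists s. split; [apply (follow_itinerary s 0 (follow s) Hs ltac:(lra) Hf0) |].
      apply (follow_itinerary s psi g Hs Hp Hgs).
    - exists (arc_start (s 0%Z)).
      rewrite (follow_on_segment s Hs 0) by lra. rewrite Rminus_0_r. apply arc_pt_0. }
  destruct Hr as [Hro [[s0 [I1 I2]] [l Hl]]].
  replace s0 with s in I1 by (symmetry; apply (follow_itinerary s psi g Hs Hp Hgs); auto).
  destruct (Omega_inf_follow _ Hro) as [s1 [psi1 [Hs1 [Hp1 Hr1]]]].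
  assert (Hpsi1 : psi1 = 0).
  { destruct (Req_dec psi1 0) as [|NE]; auto. exfalso.
    rewrite Hr1, (follow_on_segment s1 Hs1 0) in Hl by lra.
    destruct (arc_arc_pt (s1 0%Z) (0 + psi1 - IZR 0)) as [C _]; [simpl; lra |].
    rewrite Hl in C. exact (IZR_not_between _ _ C). }
  subst psi1.
  replace s1 with s in Hr1 by (apply (follow_itinerary s1 0 (rep g) Hs1 Hp1 Hr1); auto).
  apply functional_extensionality. intros t. rewrite Hr1. f_equal. ring.
Qed.

Lemma Omega_inf_data g : Omega_inf g -> exists s psi, chained s /\ 0 <= psi < 1 /\
  (forall t, g t = follow s (t + psi)) /\ itin g = s /\ rep g = follow s.
Proof.
  intros Hg. destruct (Omega_inf_follow g Hg) as [s [psi [Hs [Hp Hgs]]]].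
  exists s, psi. repeat split; auto; try lra.
  - apply (itin_follow s psi); auto.
  - apply (rep_follow g s psi); auto.
Qed.

(** * Sums over [Z] with geometrically decaying terms *)

Lemma Series_nonneg (a : nat -> R) : (forall n, 0 <= a n) -> ex_series a -> 0 <= Series a.
Proof.
  intros H E. replace 0 with (Series (fun n => 0 * a n)) by (rewrite Series_scal_l; ring).
  apply Series_le; auto. intros n. rewrite Rmult_0_l. split; [lra | auto].
Qed.

Lemma Series_ge_term (a : nat -> R) n : (forall k, 0 <= a k) -> ex_series a -> a n <= Series a.
Proof.
  intros H E. rewrite (Series_incr_n a (S n)) by (auto || lia). simpl pred.
  assert (a n <= sum_f_R0 a n).
  { destruct n; simpl; [lra |]. generalize (cond_pos_sum a n H). lra. }
  assert (0 <= Series (fun k => a (S n + k)%nat)).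
  { apply Series_nonneg; auto. apply (ex_series_incr_n a (S n)), E. }
  lra.
Qed.

Lemma ex_series_geom_scal C q : 0 <= q < 1 -> ex_series (fun n => C * q ^ n).
Proof.
  intros Hq. apply (ex_series_scal_l (V := R_NormedModule) C (fun n => q ^ n)).
  apply ex_series_geom. rewrite Rabs_pos_eq; lra.
Qed.

Lemma ex_series_geom_dominated (a : nat -> R) C q : 0 <= q < 1 ->
  (forall n, 0 <= a n <= C * q ^ n) -> ex_series a.
Proof.
  intros Hq H. apply (ex_series_le a (fun n => C * q ^ n)); [|apply ex_series_geom_scal, Hq].
  intros n. change (norm (a n)) with (Rabs (a n)). rewrite Rabs_pos_eq; apply H.
Qed.

Lemma Series_geom_dominated_tail (a : nat -> R) C q N : 0 <= q < 1 ->
  (forall n, 0 <= a n <= C * q ^ n) -> (forall n, (n < N)%nat -> a n = 0) ->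
  Series a <= C * q ^ N / (1 - q).
Proof.
  intros Hq H Hz.
  assert (Hgeom : Series (fun n => C * q ^ N * q ^ n) = C * q ^ N / (1 - q)).
  { rewrite Series_scal_l, Series_geom by (rewrite Rabs_pos_eq; lra). reflexivity. }
  assert (Egeom := ex_series_geom_scal (C * q ^ N) q Hq).
  rewrite <- Hgeom. destruct N as [|N].
  - apply Series_le; auto. intros n. simpl. rewrite Rmult_1_r. apply H.
  - rewrite (Series_incr_n a (S N)) by (eauto using ex_series_geom_dominated; lia).
    simpl pred. rewrite sum_eq_R0, Rplus_0_l by (intros; apply Hz; lia). apply Series_le; auto.
    intros n. rewrite Rmult_assoc, <- pow_add. apply H.
Qed.

Lemma INR_S_half_pow n : INR (S n) * (/ 2) ^ n <= 2 * (3 / 4) ^ n.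
Proof.
  assert (Hlin : INR (S n) <= 2 * (3 / 2) ^ n).
  { induction n as [|n IH]; [simpl; lra |].
    assert (1 <= (3 / 2) ^ n) by (apply pow_R1_Rle; lra).
    rewrite S_INR. simpl pow. nra. }
  replace (3 / 4) with (3 / 2 * / 2) by field. rewrite Rpow_mult_distr.
  assert (0 < (/ 2) ^ n) by (apply pow_lt; lra). nra.
Qed.

Definition sumZ_dominated (a : Z -> R) (C : R) : Prop :=
  forall i, 0 <= a i <= C * INR (S (Z.abs_nat i)) * (/ 2) ^ (Z.abs_nat i).

Lemma sumZ_dominated_nonneg a C : sumZ_dominated a C -> 0 <= C.
Proof. intros H. destruct (H 0%Z) as [H1 H2]. simpl in H2. lra. Qed.

Lemma sumZ_dominated_halves a C : sumZ_dominated a C ->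
  (forall n, 0 <= a (Z.of_nat n) <= 2 * C * (3 / 4) ^ n) /\
  (forall n, 0 <= a (- Z.of_nat (S n))%Z <= 2 * C * (3 / 4) ^ n).
Proof.
  intros H. assert (HC := sumZ_dominated_nonneg a C H).
  assert (G : forall i, 0 <= a i <= 2 * C * (3 / 4) ^ (Z.abs_nat i)).
  { intros i. destruct (H i) as [H1 H2]. split; auto.
    generalize (INR_S_half_pow (Z.abs_nat i)). nra. }
  split; intros n.
  - generalize (G (Z.of_nat n)). rewrite Zabs2Nat.id. auto.
  - generalize (G (- Z.of_nat (S n))%Z).
    replace (Z.abs_nat (- Z.of_nat (S n))) with (S n) by lia. simpl pow.
    generalize (pow_le (3 / 4) n ltac:(lra)). nra.
Qed.

Lemma sumZ_ge_term a C i : sumZ_dominated a C -> a i <= sumZ a.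
Proof.
  intros H. destruct (sumZ_dominated_halves a C H) as [Hp Hm].
  assert (Hq : 0 <= 3 / 4 < 1) by lra.
  assert (Ep := ex_series_geom_dominated _ _ _ Hq Hp).
  assert (Em := ex_series_geom_dominated _ _ _ Hq Hm).
  assert (Np := Series_nonneg _ (fun n => proj1 (Hp n)) Ep).
  assert (Nm := Series_nonneg _ (fun n => proj1 (Hm n)) Em).
  unfold sumZ. destruct (Z_lt_le_dec i 0).
  - pose proof (Series_ge_term _ (Z.to_nat (- i - 1)) (fun k => proj1 (Hm k)) Em) as T.
    cbv beta in T. replace (- Z.of_nat (S (Z.to_nat (- i - 1))))%Z with i in T by lia. lra.
  - pose proof (Series_ge_term _ (Z.to_nat i) (fun k => proj1 (Hp k)) Ep) as T.
    cbv beta in T. rewrite Z2Nat.id in T by lia. lra.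
Qed.

Lemma sumZ_le_of_vanishing a C N : sumZ_dominated a C ->
  (forall i, (Z.abs_nat i <= N)%nat -> a i = 0) -> sumZ a <= 16 * C * (3 / 4) ^ N.
Proof.
  intros H Hz. destruct (sumZ_dominated_halves a C H) as [Hp Hm].
  assert (Hq : 0 <= 3 / 4 < 1) by lra.
  assert (Sp : Series (fun n => a (Z.of_nat n)) <= 2 * C * (3 / 4) ^ N / (1 - 3 / 4)).
  { apply Series_geom_dominated_tail; auto. intros n Hn. apply Hz. rewrite Zabs2Nat.id. lia. }
  assert (Sm : Series (fun n => a (- Z.of_nat (S n))%Z) <= 2 * C * (3 / 4) ^ N / (1 - 3 / 4)).
  { apply Series_geom_dominated_tail; auto. intros n Hn. apply Hz. lia. }
  unfold sumZ. replace (16 * C * (3 / 4) ^ N) with (2 * (2 * C * (3 / 4) ^ N / (1 - 3 / 4)))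
    by field. lra.
Qed.

(** * Hausdorff distance *)

Lemma dist2_ge0 p q : 0 <= dist2 p q.
Proof. apply sqrt_pos. Qed.

Lemma dist2_refl p : dist2 p p = 0.
Proof. unfold dist2. rewrite !Rminus_diag. simpl. rewrite !Rmult_0_l, Rplus_0_l. apply sqrt_0. Qed.

Lemma dist2_sym p q : dist2 p q = dist2 q p.
Proof. unfold dist2. f_equal. ring. Qed.

Lemma dist2_le_abs p q : dist2 p q <= Rabs (fst p - fst q) + Rabs (snd p - snd q).
Proof.
  unfold dist2. set (a := fst p - fst q). set (b := snd p - snd q).
  rewrite <- (sqrt_pow2 (Rabs a + Rabs b)) by (generalize (Rabs_pos a) (Rabs_pos b); lra).
  apply sqrt_le_1_alt. rewrite <- (pow2_abs a), <- (pow2_abs b).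
  generalize (Rabs_pos a) (Rabs_pos b). nra.
Qed.

Lemma Rabs_fst_le_dist2 p q : Rabs (fst p - fst q) <= dist2 p q.
Proof.
  unfold dist2. rewrite <- (sqrt_pow2 (Rabs (fst p - fst q))) by apply Rabs_pos.
  apply sqrt_le_1_alt. rewrite pow2_abs. generalize (pow2_ge_0 (snd p - snd q)). lra.
Qed.

Lemma Rabs_snd_le_dist2 p q : Rabs (snd p - snd q) <= dist2 p q.
Proof.
  unfold dist2. rewrite <- (sqrt_pow2 (Rabs (snd p - snd q))) by apply Rabs_pos.
  apply sqrt_le_1_alt. rewrite pow2_abs. generalize (pow2_ge_0 (fst p - fst q)). lra.
Qed.

Lemma Glb_Rbar_bounds (E : R -> Prop) lo x : E x -> (forall y, E y -> lo <= y) ->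
  lo <= real (Glb_Rbar E) <= x.
Proof.
  intros Hx Hlo. destruct (Glb_Rbar_correct E) as [Hlb Hg].
  assert (A := Hlb x Hx). assert (B := Hg (Finite lo) Hlo).
  destruct (Glb_Rbar E); simpl in *; try contradiction; lra.
Qed.

Lemma Lub_Rbar_bounds (E : R -> Prop) x hi : E x -> (forall y, E y -> y <= hi) ->
  x <= real (Lub_Rbar E) <= hi.
Proof.
  intros Hx Hhi. destruct (Lub_Rbar_correct E) as [Hub Hl].
  assert (A := Hub x Hx). assert (B := Hl (Finite hi) Hhi).
  destruct (Lub_Rbar E); simpl in *; try contradiction; lra.
Qed.

Lemma dist_pt_set_bounds a B b c : B b -> (forall q, B q -> c <= dist2 a q) ->
  c <= dist_pt_set a B <= dist2 a b.
Proof.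
  intros Hb H. apply Glb_Rbar_bounds; [exists b; auto |]. intros y [q [Hq ->]]. auto.
Qed.

Lemma dH_ge A B a b0 c M : A a -> B b0 -> (forall a', A a' -> dist2 a' b0 <= M) ->
  (forall b, B b -> c <= dist2 a b) -> c <= dH A B.
Proof.
  intros Ha Hb0 HM Hc. unfold dH. eapply Rle_trans; [|apply Rmax_l].
  eapply Rle_trans; [apply (dist_pt_set_bounds a B b0 c Hb0 Hc) |].
  apply (Lub_Rbar_bounds _ _ M); [exists a; auto |].
  intros y [a' [Ha' ->]].
  destruct (dist_pt_set_bounds a' B b0 0 Hb0 (fun q _ => dist2_ge0 a' q)).
  generalize (HM a' Ha'). lra.
Qed.

Lemma dH_le A B a0 b0 e : A a0 -> B b0 ->
  (forall a, A a -> exists b, B b /\ dist2 a b <= e) ->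
  (forall b, B b -> exists a, A a /\ dist2 b a <= e) -> dH A B <= e.
Proof.
  intros Ha0 Hb0 H1 H2. unfold dH. apply Rmax_lub.
  - apply (Lub_Rbar_bounds _ (dist_pt_set a0 B)); [exists a0; auto |].
    intros y [a [Ha ->]]. destruct (H1 a Ha) as [b [Hb Hd]].
    destruct (dist_pt_set_bounds a B b 0 Hb (fun q _ => dist2_ge0 a q)). lra.
  - apply (Lub_Rbar_bounds _ (dist_pt_set b0 A)); [exists b0; auto |].
    intros y [b [Hb ->]]. destruct (H2 b Hb) as [a [Ha Hd]].
    destruct (dist_pt_set_bounds b A a 0 Ha (fun q _ => dist2_ge0 b q)). lra.
Qed.

(** * Comparing [rho_inf] with [dTheta] *)

Lemma arc_start_rel a : (a = 2 * arc_start a \/ a = 2 * arc_start a - 1)%Z.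
Proof.
  unfold arc_start. destruct (Z_even_div2 a) as [E O].
  destruct (Z.even a); [left; auto | right; rewrite (O eq_refl) at 1; lia].
Qed.

Lemma arc_end_rel a : (a = 2 * arc_end a - 2 \/ a = 2 * arc_end a + 1)%Z.
Proof.
  unfold arc_end. destruct (Z_even_div2 a) as [E O].
  destruct (Z.even a); [left; rewrite (E eq_refl) at 1; lia | right; auto].
Qed.

Lemma chained_Theta s : chained s -> Theta_inf s.
Proof. intros Hs j. generalize (Hs j) (arc_end_rel (s j)) (arc_start_rel (s (j + 1)%Z)). lia. Qed.

Lemma Z_drift (f : Z -> Z) c : (forall j, Z.abs (f (j + 1) - f j) <= c)%Z ->
  forall j, (Z.abs (f j - f 0) <= c * Z.abs j)%Z.
Proof.
  intros H j. destruct (Z_lt_le_dec j 0) as [L|L].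
  - replace j with (- Z.of_nat (Z.to_nat (- j)))%Z by lia.
    induction (Z.to_nat (- j)) as [|n IH]; [simpl; lia |].
    generalize (H (- Z.of_nat (S n))%Z).
    replace (- Z.of_nat (S n) + 1)%Z with (- Z.of_nat n)%Z by lia. nia.
  - replace j with (Z.of_nat (Z.to_nat j)) by lia.
    induction (Z.to_nat j) as [|n IH]; [simpl; lia |].
    generalize (H (Z.of_nat n)). replace (Z.of_nat n + 1)%Z with (Z.of_nat (S n)) by lia. nia.
Qed.

Lemma follow_fst_bound s i t : chained s -> IZR i <= t <= IZR i + 1 ->
  Rabs (fst (follow s t) - IZR (arc_start (s 0%Z))) <= IZR (Z.abs i) + 1.
Proof.
  intros Hs Ht. rewrite (follow_on_segment s Hs i t Ht). simpl.
  assert (D : (Z.abs (arc_start (s i) - arc_start (s 0%Z)) <= 1 * Z.abs i)%Z).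
  { apply (Z_drift (fun j => arc_start (s j))). intros k. rewrite <- (Hs k).
    unfold arc_end, arc_start. destruct (Z.even (s k)); lia. }
  apply IZR_le in D. rewrite mult_IZR, Rmult_1_l, abs_IZR, minus_IZR in D.
  assert (A : Rabs (arc_x (s i) (t - IZR i) - IZR (arc_start (s i))) <= 1).
  { unfold arc_x, arc_start. destruct (Z.even (s i)); rewrite ?plus_IZR; apply Rabs_le; lra. }
  replace (arc_x (s i) (t - IZR i) - IZR (arc_start (s 0%Z))) with
    ((arc_x (s i) (t - IZR i) - IZR (arc_start (s i))) +
     (IZR (arc_start (s i)) - IZR (arc_start (s 0%Z)))) by ring.
  eapply Rle_trans; [apply Rabs_triang | lra].
Qed.

Lemma follow_snd_bound s t : Rabs (snd (follow s t)) <= 1.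
Proof.
  unfold follow, arc_pt; simpl. set (x := arc_x _ _).
  generalize (Pinf_ge0 x) (Pinf_le x) two_over_PI_bounds. intros.
  destruct (Z.even _); apply Rabs_le; lra.
Qed.

Lemma follow_dist_bound s s' i t t' : chained s -> chained s' ->
  IZR i <= t <= IZR i + 1 -> IZR i <= t' <= IZR i + 1 ->
  dist2 (follow s t) (follow s' t') <=
    IZR (Z.abs (arc_start (s 0%Z) - arc_start (s' 0%Z))) + 2 * IZR (Z.abs i) + 4.
Proof.
  intros Hs Hs' Ht Ht'.
  generalize (follow_fst_bound s i t Hs Ht) (follow_fst_bound s' i t' Hs' Ht')
    (follow_snd_bound s t) (follow_snd_bound s' t').
  set (x := fst (follow s t)). set (x' := fst (follow s' t')).
  set (y := snd (follow s t)). set (y' := snd (follow s' t')).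
  set (c := IZR (arc_start (s 0%Z))). set (c' := IZR (arc_start (s' 0%Z))).
  intros A1 A2 A3 A4.
  assert (Hcc : Rabs (c - c') = IZR (Z.abs (arc_start (s 0%Z) - arc_start (s' 0%Z))))
    by (unfold c, c'; rewrite abs_IZR, minus_IZR; reflexivity).
  eapply Rle_trans; [apply dist2_le_abs |].
  assert (Rabs (x - x') <= Rabs (x - c) + Rabs (c - c') + Rabs (x' - c')).
  { rewrite (Rabs_minus_sym x' c').
    replace (x - x') with ((x - c) + (c - c') + (c' - x')) by ring.
    eapply Rle_trans; [apply Rabs_triang |].
    apply Rplus_le_compat_r, Rabs_triang. }
  assert (Rabs (y - y') <= Rabs y + Rabs y').
  { unfold Rminus. eapply Rle_trans; [apply Rabs_triang | rewrite Rabs_Ropp; lra]. }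
  fold x x' y y'. lra.
Qed.

Lemma arc_midpoint_sep a a' u : a <> a' -> 0 <= u <= 1 ->
  / 2 <= dist2 (arc_pt a (/ 2)) (arc_pt a' u).
Proof.
  intros Ha Hu. destruct (Z.eq_dec (a / 2) (a' / 2)) as [E|NE].
  - eapply Rle_trans; [|apply Rabs_snd_le_dist2].
    assert (Hp : Pinf (arc_x a (/ 2)) = 2 / PI) by (rewrite arc_x_half; apply Pinf_half).
    generalize (Pinf_ge0 (arc_x a' u)) two_over_PI_bounds. intros.
    destruct (Z_even_div2 a) as [Ea Oa], (Z_even_div2 a') as [Ea' Oa'].
    unfold arc_pt; simpl. destruct (Z.even a), (Z.even a').
    + exfalso. apply Ha. rewrite (Ea eq_refl), (Ea' eq_refl), E. reflexivity.
    + rewrite Hp, Rabs_pos_eq; lra.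
    + rewrite Hp, Rabs_left1; lra.
    + exfalso. apply Ha. rewrite (Oa eq_refl), (Oa' eq_refl), E. reflexivity.
  - eapply Rle_trans; [|apply Rabs_fst_le_dist2]. simpl. rewrite arc_x_half.
    generalize (arc_x_range a' u Hu). intros.
    destruct (Z_lt_le_dec (a / 2) (a' / 2)) as [L|L];
      [assert (L' : (a / 2 + 1 <= a' / 2)%Z) by lia | assert (L' : (a' / 2 + 1 <= a / 2)%Z) by lia];
      apply IZR_le in L'; rewrite plus_IZR in L';
      [rewrite Rabs_left1 | rewrite Rabs_pos_eq]; lra.
Qed.

Definition seg_gap (s s' : Z -> Z) (i : Z) : R :=
  (/ 2) ^ (Z.abs_nat i) * dH (seg (follow s) i) (seg (follow s') i).

Definition digit_gap (x y : Z -> Z) (j : Z) : R := IZR (Z.abs (x j - y j)) / 2 ^ (Z.abs_nat j).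

Definition agree_upto (x y : Z -> Z) (N : nat) : Prop :=
  forall i, (Z.abs_nat i <= N)%nat -> x i = y i.

Lemma seg_at (f : R -> pt) i t : IZR i <= t <= IZR i + 1 -> seg f i (f t).
Proof. intros. exists t; split; auto. Qed.

Section SegGap.
Variables s s' : Z -> Z.
Hypothesis s_chained : chained s.
Hypothesis s'_chained : chained s'.
Variable i : Z.

Let D := IZR (Z.abs (arc_start (s 0%Z) - arc_start (s' 0%Z))).
Let M := D + 2 * IZR (Z.abs i) + 4.

Lemma seg_dist_bound a b : seg (follow s) i a -> seg (follow s') i b -> dist2 a b <= M.
Proof. intros [t [Ht ->]] [t' [Ht' ->]]. apply follow_dist_bound; auto. Qed.

Lemma seg_gap_bounds :
  0 <= seg_gap s s' i <= (D + 4) * INR (S (Z.abs_nat i)) * (/ 2) ^ (Z.abs_nat i).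
Proof.
  assert (Hi : IZR i <= IZR i <= IZR i + 1) by lra.
  assert (HD : 0 <= D) by (apply IZR_le; lia).
  assert (P2 : 0 < (/ 2) ^ Z.abs_nat i) by (apply pow_lt; lra).
  unfold seg_gap. split.
  - apply Rmult_le_pos; [lra |].
    apply (dH_ge _ _ _ _ 0 M (seg_at _ _ _ Hi) (seg_at _ _ _ Hi));
      [intros; apply seg_dist_bound; auto using seg_at | intros; apply dist2_ge0].
  - assert (Hdh : dH (seg (follow s) i) (seg (follow s') i) <= M).
    { apply (dH_le _ _ _ _ _ (seg_at _ _ _ Hi) (seg_at _ _ _ Hi)).
      - intros a Ha. exists (follow s' (IZR i)). split; [apply seg_at, Hi |].
        apply seg_dist_bound; auto using seg_at.
      - intros b Hb. exists (follow s (IZR i)). split; [apply seg_at, Hi |].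
        rewrite dist2_sym. apply seg_dist_bound; auto using seg_at. }
    unfold M in Hdh. rewrite S_INR, INR_IZR_INZ, Zabs2Nat.id_abs.
    assert (0 <= IZR (Z.abs i)) by (apply IZR_le; lia).
    rewrite Rmult_comm. apply Rmult_le_compat_r; nra.
Qed.

Lemma seg_gap_eq0 : s i = s' i -> seg_gap s s' i = 0.
Proof.
  intros E. assert (Hi : IZR i <= IZR i <= IZR i + 1) by lra.
  assert (EG : forall t, IZR i <= t <= IZR i + 1 -> follow s t = follow s' t).
  { intros t Ht.
    rewrite (follow_on_segment s s_chained i t Ht), (follow_on_segment s' s'_chained i t Ht), E.
    reflexivity. }
  assert (dH (seg (follow s) i) (seg (follow s') i) <= 0).
  { apply (dH_le _ _ _ _ _ (seg_at _ _ _ Hi) (seg_at _ _ _ Hi)).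
    - intros a [t [Ht ->]]. exists (follow s' t). split; [apply seg_at, Ht |].
      rewrite EG, dist2_refl by auto. lra.
    - intros b [t [Ht ->]]. exists (follow s t). split; [apply seg_at, Ht |].
      rewrite EG, dist2_refl by auto. lra. }
  destruct seg_gap_bounds as [H0 _]. unfold seg_gap in *.
  assert (0 < (/ 2) ^ Z.abs_nat i) by (apply pow_lt; lra). nra.
Qed.

Lemma seg_gap_ge : s i <> s' i -> (/ 2) ^ (Z.abs_nat i) * / 2 <= seg_gap s s' i.
Proof.
  intros NE. unfold seg_gap. apply Rmult_le_compat_l; [left; apply pow_lt; lra |].
  assert (Hm : IZR i <= IZR i + / 2 <= IZR i + 1) by lra.
  apply (dH_ge _ _ _ (follow s' (IZR i)) _ M (seg_at _ _ _ Hm)).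
  - apply seg_at. lra.
  - intros a Ha. apply seg_dist_bound; auto. apply seg_at. lra.
  - intros b [t [Ht ->]].
    rewrite (follow_on_segment s s_chained i _ Hm), (follow_on_segment s' s'_chained i t Ht).
    replace (IZR i + / 2 - IZR i) with (/ 2) by ring. apply arc_midpoint_sep; auto. lra.
Qed.
End SegGap.

Lemma seg_gap_dominated s s' : chained s -> chained s' ->
  sumZ_dominated (seg_gap s s') (IZR (Z.abs (arc_start (s 0%Z) - arc_start (s' 0%Z))) + 4).
Proof. intros Hs Hs' i. apply seg_gap_bounds; auto. Qed.

Lemma digit_gap_dominated x y : Theta_inf x -> Theta_inf y ->
  sumZ_dominated (digit_gap x y) (IZR (Z.abs (x 0%Z - y 0%Z)) + 4).
Proof.
  intros Hx Hy j. generalize (Z_drift x 2 Hx j) (Z_drift y 2 Hy j). intros D1 D2.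
  assert (B : (Z.abs (x j - y j) <= Z.abs (x 0%Z - y 0%Z) + 4 * Z.abs j)%Z) by lia.
  apply IZR_le in B. rewrite plus_IZR, mult_IZR in B.
  unfold digit_gap, Rdiv. rewrite <- pow_inv, S_INR, INR_IZR_INZ, Zabs2Nat.id_abs.
  assert (0 < (/ 2) ^ Z.abs_nat j) by (apply pow_lt; lra).
  assert (0 <= IZR (Z.abs (x j - y j))) by (apply IZR_le; lia).
  assert (0 <= IZR (Z.abs (x 0%Z - y 0%Z))) by (apply IZR_le; lia).
  assert (0 <= IZR (Z.abs j)) by (apply IZR_le; lia).
  split; [nra |]. apply Rmult_le_compat_r; nra.
Qed.

Lemma IZR_abs_ge0 z : 0 <= IZR (Z.abs z).
Proof. apply IZR_le. lia. Qed.

Lemma half_pow_antimono k N : (k <= N)%nat -> (/ 2) ^ N <= (/ 2) ^ k.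
Proof.
  intros H. rewrite !pow_inv.
  apply Rinv_le_contravar; [apply pow_lt; lra | apply Rle_pow; [lra | exact H]].
Qed.

Lemma half_pow_half_pos N : (/ 2) ^ N * / 2 > 0.
Proof. apply Rmult_lt_0_compat; [apply pow_lt |]; lra. Qed.

Lemma dTheta_lt_agree x y N : Theta_inf x -> Theta_inf y ->
  dTheta x y < (/ 2) ^ N * / 2 -> agree_upto x y N.
Proof.
  intros Hx Hy Hd i Hi. change (dTheta x y) with (sumZ (digit_gap x y)) in Hd.
  assert (Hle := sumZ_ge_term _ _ i (digit_gap_dominated x y Hx Hy)).
  assert (Hlt : digit_gap x y i < (/ 2) ^ N * / 2) by lra.
  unfold digit_gap, Rdiv in Hlt. rewrite <- pow_inv in Hlt.
  generalize (half_pow_antimono _ _ Hi) (pow_lt (/ 2) N ltac:(lra)) (IZR_abs_ge0 (x i - y i)).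
  intros. assert (Hlt1 : IZR (Z.abs (x i - y i)) < 1) by nra.
  apply lt_IZR in Hlt1. lia.
Qed.

Lemma agree_dTheta_le x y N : Theta_inf x -> Theta_inf y ->
  agree_upto x y N -> dTheta x y <= 64 * (3 / 4) ^ N.
Proof.
  intros Hx Hy Ha. change (dTheta x y) with (sumZ (digit_gap x y)).
  replace (64 * (3 / 4) ^ N) with (16 * (IZR (Z.abs (x 0%Z - y 0%Z)) + 4) * (3 / 4) ^ N)
    by (rewrite (Ha 0%Z), Z.sub_diag by (simpl; lia); simpl; ring).
  apply sumZ_le_of_vanishing; [apply digit_gap_dominated; auto |].
  intros i Hi. unfold digit_gap. rewrite (Ha i Hi), Z.sub_diag. simpl. unfold Rdiv. ring.
Qed.

Lemma rho_sum_lt_agree s s' N : chained s -> chained s' ->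
  sumZ (seg_gap s s') < (/ 2) ^ N * / 2 -> agree_upto s s' N.
Proof.
  intros Hs Hs' Hd i Hi. destruct (Z.eq_dec (s i) (s' i)) as [|NE]; auto. exfalso.
  generalize (seg_gap_ge s s' Hs Hs' i NE) (half_pow_antimono _ _ Hi)
    (sumZ_ge_term _ _ i (seg_gap_dominated s s' Hs Hs')).
  lra.
Qed.

Lemma agree_rho_sum_le s s' N : chained s -> chained s' ->
  agree_upto s s' N -> sumZ (seg_gap s s') <= 64 * (3 / 4) ^ N.
Proof.
  intros Hs Hs' Ha.
  replace (64 * (3 / 4) ^ N)
    with (16 * (IZR (Z.abs (arc_start (s 0%Z) - arc_start (s' 0%Z))) + 4) * (3 / 4) ^ N)
    by (rewrite (Ha 0%Z), Z.sub_diag by (simpl; lia); simpl; ring).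
  apply sumZ_le_of_vanishing; [apply seg_gap_dominated; auto |].
  intros i Hi. apply seg_gap_eq0; auto.
Qed.

Lemma rho_inf_follow g g' s s' : rep g = follow s -> rep g' = follow s' ->
  rho_inf g g' = sumZ (seg_gap s s').
Proof. intros H H'. unfold rho_inf. rewrite H, H'. reflexivity. Qed.

Lemma exists_pow_lt eps : eps > 0 -> exists N, 64 * (3 / 4) ^ N < eps.
Proof.
  intros He. destruct (pow_lt_1_zero (3 / 4)) with (y := eps / 64) as [N HN];
    [rewrite Rabs_pos_eq; lra | lra |].
  exists N. specialize (HN N (le_n N)). rewrite Rabs_pos_eq in HN; [lra |].
  left; apply pow_lt; lra.
Qed.

(** * The conjugacy *)

Lemma chained_subshift : subshift chained.
Proof.
  split; [exact chained_Theta | split; [| split; [exact chained_shift |]]].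
  - intros x Hx Hclose j.
    destruct (Hclose _ (half_pow_half_pos (Z.abs_nat j + Z.abs_nat (j + 1)))) as [y [Hy Hd]].
    assert (Ha := dTheta_lt_agree x y _ Hx (chained_Theta y Hy) Hd).
    rewrite (Ha j), (Ha (j + 1)%Z) by lia. apply Hy.
  - intros x Hx. exists (fun j => x (j - 1)%Z). split.
    + intros j. rewrite Hx. do 2 f_equal. lia.
    + apply functional_extensionality. intros j. unfold sigma_shift. f_equal. lia.
Qed.

Lemma itin_eq_iff_equiv g1 g2 : Omega_inf g1 -> Omega_inf g2 ->
  itin g1 = itin g2 <-> itin_equiv g1 g2.
Proof.
  intros H1 H2.
  destruct (Omega_inf_data g1 H1) as [s1 [p1 [Hs1 [Hp1 [Hg1 [-> _]]]]]].
  destruct (Omega_inf_data g2 H2) as [s2 [p2 [Hs2 [Hp2 [Hg2 [-> _]]]]]].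
  destruct (follow_itinerary s1 p1 g1 Hs1 Hp1 Hg1) as [I1 U1].
  destruct (follow_itinerary s2 p2 g2 Hs2 Hp2 Hg2) as [I2 U2].
  split.
  - intros <-. exists s1. auto.
  - intros [s [J1 J2]]. rewrite <- (U1 s J1), <- (U2 s J2). reflexivity.
Qed.

Lemma itin_chained g : Omega_inf g -> chained (itin g).
Proof. intros Hg. destruct (Omega_inf_data g Hg) as [s [_ [Hs [_ [_ [-> _]]]]]]. exact Hs. Qed.

Lemma itin_surj x : chained x -> exists g, Omega_inf g /\ itin g = x.
Proof.
  intros Hx. exists (follow x). split; [apply follow_Omega_inf, Hx |].
  apply (itin_follow x 0); [auto | lra |]. intros t. f_equal. ring.
Qed.

Lemma itin_continuous g : Omega_inf g -> forall eps, eps > 0 -> exists delta, delta > 0 /\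
  forall g', Omega_inf g' -> rho_inf g g' < delta -> dTheta (itin g) (itin g') < eps.
Proof.
  intros Hg eps Heps. destruct (exists_pow_lt eps Heps) as [N HN].
  exists ((/ 2) ^ N * / 2). split; [apply half_pow_half_pos |]. intros g' Hg' Hrho.
  destruct (Omega_inf_data g Hg) as [s [_ [Hs [_ [_ [-> Hr]]]]]].
  destruct (Omega_inf_data g' Hg') as [s' [_ [Hs' [_ [_ [-> Hr']]]]]].
  rewrite (rho_inf_follow g g' s s' Hr Hr') in Hrho.
  eapply Rle_lt_trans; [|exact HN].
  apply agree_dTheta_le; try apply chained_Theta; auto.
  apply rho_sum_lt_agree; auto.
Qed.

Lemma itin_inv_continuous g : Omega_inf g -> forall eps, eps > 0 -> exists delta, delta > 0 /\
  forall g', Omega_inf g' -> dTheta (itin g) (itin g') < delta -> rho_inf g g' < eps.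
Proof.
  intros Hg eps Heps. destruct (exists_pow_lt eps Heps) as [N HN].
  exists ((/ 2) ^ N * / 2). split; [apply half_pow_half_pos |]. intros g' Hg' Hd.
  destruct (Omega_inf_data g Hg) as [s [_ [Hs [_ [_ [Hi Hr]]]]]].
  destruct (Omega_inf_data g' Hg') as [s' [_ [Hs' [_ [_ [Hi' Hr']]]]]].
  rewrite Hi, Hi' in Hd. rewrite (rho_inf_follow g g' s s' Hr Hr').
  eapply Rle_lt_trans; [|exact HN].
  apply agree_rho_sum_le; auto.
  apply dTheta_lt_agree; try apply chained_Theta; auto.
Qed.

Lemma itin_T1 g : Omega_inf g -> itin (T1 g) = sigma_shift (itin g).
Proof.
  intros Hg. destruct (Omega_inf_data g Hg) as [s [p [Hs [Hp [Hgs [-> _]]]]]].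
  apply (itin_follow (sigma_shift s) p); [apply chained_shift, Hs | exact Hp |].
  intros t. unfold T1. rewrite Hgs, <- follow_succ. f_equal. ring.
Qed.

Theorem theoremA :
  invariant Xinf Yinf Lambda_inf /\
  exists (K : (Z -> Z) -> Prop) (h : (R -> pt) -> (Z -> Z)),
    subshift K /\
    (* h is well defined on classes and injective on classes *)
    (forall g1 g2, Omega_inf g1 -> Omega_inf g2 ->
       (h g1 = h g2 <-> itin_equiv g1 g2)) /\
    (* h maps onto K *)
    (forall g, Omega_inf g -> K (h g)) /\
    (forall x, K x -> exists g, Omega_inf g /\ h g = x) /\
    (* h is continuous from (Omega_bar, rho) to (K, d) *)
    (forall g, Omega_inf g -> forall eps, eps > 0 -> exists delta, delta > 0 /\
       forall g', Omega_inf g' -> rho_inf g g' < delta -> dTheta (h g) (h g') < eps) /\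
    (* h^{-1} is continuous from (K, d) to (Omega_bar, rho) *)
    (forall g, Omega_inf g -> forall eps, eps > 0 -> exists delta, delta > 0 /\
       forall g', Omega_inf g' -> dTheta (h g) (h g') < delta -> rho_inf g g' < eps) /\
    (* conjugacy: h o T1_bar = sigma o h *)
    (forall g, Omega_inf g -> h (T1 g) = sigma_shift (h g)).
Proof.
  split; [exact Lambda_inf_invariant |].
  exists chained, itin.
  split; [exact chained_subshift |].
  split; [exact itin_eq_iff_equiv |].
  split; [exact itin_chained |].
  split; [exact itin_surj |].
  split; [exact itin_continuous |].
  split; [exact itin_inv_continuous |].
  exact itin_T1.
Qed.
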